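(* Let $n$ be odd and $\alpha>0$ with $\alpha\,bin(n,\tfrac12,i)\le1$ for all $i$. Let $P_e$ be the distribution on $\{0,1\}^{n+1}$ in which coordinate $i\in\{0,\ldots,n\}$ is independently $1$ with probability $S_e(i)$. Then the number of strings $u$ with $P_e(u)\ge e^{-\sqrt n/2}$ is at most $e^{\sqrt n/2}$, and the total probability $\sum_{u:\,P_e(u)<e^{-\sqrt n/2}}P_e(u)$ is at most $e^{\sqrt\alpha(2\pi n)^{1/4}-\sqrt n/4}$. The same holds for the analogous distribution induced by $S_o$.
   Context: $bin(n,p,k)=\binom nk p^k(1-p)^{n-k}$. $S_e(i)=\alpha\,bin(n,\tfrac12,i)$ for even $i$ and $0$ for odd $i$; $S_o(i)=\alpha\,bin(n,\tfrac12,i)$ for odd $i$ and $0$ for even $i$, for $i\in\{0,\ldots,n\}$. *)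

From HB Require Import structures.
From mathcomp Require Import all_boot all_order all_algebra.
From mathcomp Require Import all_classical all_reals all_analysis.
Set Implicit Arguments. Unset Strict Implicit. Unset Printing Implicit Defensive.
Import Order.TTheory GRing.Theory Num.Theory.
Local Open Scope ring_scope.

Definition bin {R : realType} (n : nat) (p : R) (k : nat) : R :=
  'C(n, k)%:R * p ^+ k * (1 - p) ^+ (n - k).

Definition S_e {R : realType} (alpha : R) (n i : nat) : R :=
  if ~~ odd i then alpha * bin n (1 / 2) i else 0.

Definition S_o {R : realType} (alpha : R) (n i : nat) : R :=
  if odd i then alpha * bin n (1 / 2) i else 0.

Definition prodP {R : realType} (n : nat) (S : nat -> R)
  (u : {ffun 'I_n.+1 -> bool}) : R :=
  \prod_(i < n.+1) (if u i then S i else 1 - S i).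

From HB Require Import structures.
From mathcomp Require Import all_boot all_order all_algebra.
From mathcomp Require Import all_classical all_reals all_analysis.
From mathcomp Require Import zify ring lra.

(* The heavy strings of a product distribution are few, since each has
   probability at least t: there are at most 1/t of them.  For the light mass,
   P(u) < t gives P(u) <= sqrt t * sqrt P(u), and sum_u sqrt P(u) factors as
   prod_i (sqrt S_i + sqrt (1 - S_i)) <= exp (sum_i sqrt S_i).  As S_i is
   alpha C(n,i)/2^n on one parity class and 0 on the other, it remains to bound
   sum_{i = p mod 2} sqrt (C(n,i)/2^n) by (2 pi n)^(1/4).  This is the weighted
   Cauchy-Schwarz inequality (sum sqrt b_i)^2 <= (sum b_i w_i)(sum 1/w_i) with
   w_i = max(1, (i - n/2)^2/K^2) and K = floor(sqrt n): the binomial variance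
   n/4 controls the first factor, comparison with the primitive of
   min(1, K^2/x^2) controls the second by 4K, and the symmetry i |-> n - i,
   which exchanges the parity classes when n is odd, halves both. *)

Set Implicit Arguments.
Unset Strict Implicit.
Unset Printing Implicit Defensive.

Import Order.TTheory GRing.Theory Num.Theory.
Local Open Scope ring_scope.

Lemma nat_sqrt_exists n : exists2 s, (s * s <= n)%N & (n < s.+1 * s.+1)%N.
Proof.
elim: n => [|n [s s_le lt_s]]; first by exists 0%N.
have [le_s1|gt_s1] := leqP (s.+1 * s.+1) n.+1; first by exists s.+1 => //; nia.
by exists s => //; lia.
Qed.

Lemma sumrMn_pascal (V : nmodType) n (f : nat -> V) :
  \sum_(i < n.+2) f i *+ 'C(n.+1, i) = \sum_(i < n.+1) (f i + f i.+1) *+ 'C(n, i).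
Proof.
have shift : \sum_(i < n.+1) f i *+ 'C(n, i) = \sum_(i < n.+2) f i *+ 'C(n, i).
  by rewrite [RHS]big_ord_recr /= bin_small // mulr0n addr0.
under [RHS]eq_bigr do rewrite mulrnDl.
rewrite big_split /= shift big_ord_recl [X in _ = X + _]big_ord_recl /= !bin0 -addrA.
by congr (_ + _); rewrite -big_split; apply: eq_bigr => i _; rewrite /bump /= add1n binS mulrnDr.
Qed.

Lemma sumr_binomial (R : comPzSemiRingType) n : \sum_(i < n.+1) 'C(n, i)%:R = 2 ^+ n :> R.
Proof. by rewrite -[2]/(1 + 1 : R) exprDn; apply: eq_bigr => i _; rewrite !expr1n mulr1. Qed.

Lemma sumr_binomial_dev_sq (R : comPzRingType) n :
  \sum_(i < n.+1) (2 * i%:R - n%:R) ^+ 2 *+ 'C(n, i) = n%:R * 2 ^+ n :> R.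
Proof.
elim: n => [|n IH]; first by rewrite big_ord1 /= subr0 mulr0 expr2 mulr0 mul0r.
rewrite (@sumrMn_pascal _ n (fun i => (2 * i%:R - n.+1%:R) ^+ 2)).
have step i : (2 * i%:R - n.+1%:R) ^+ 2 + (2 * i.+1%:R - n.+1%:R) ^+ 2
              = 2 * (2 * i%:R - n%:R) ^+ 2 + 2 :> R by rewrite -!natr1; ring.
under eq_bigr do rewrite step mulrnDl -mulrnAr -[2 *+ _]mulr_natr.
by rewrite big_split /= -!mulr_sumr IH sumr_binomial exprS -natr1; ring.
Qed.

Lemma bin_half (R : realType) n i : bin n (1 / 2) i = 'C(n, i)%:R / 2 ^+ n :> R.
Proof.
rewrite /bin (_ : 1 - 1 / 2 = 1 / 2 :> R); last by field.
have [le_in|lt_ni] := leqP i n; last by rewrite bin_small // !mul0r.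
by rewrite -mulrA -exprD subnKC // expr_div_n expr1n mul1r.
Qed.

Lemma sum_parity_half (R : numFieldType) n (p : bool) (g : nat -> R) :
  odd n -> (forall i, (i <= n)%N -> g (n - i)%N = g i) ->
  \sum_(i < n.+1 | odd i == p) g i = (\sum_(i < n.+1) g i) / 2.
Proof.
move=> n_odd g_sym.
have flip : \sum_(i < n.+1 | odd i == p) g i = \sum_(i < n.+1 | odd i != p) g i.
  rewrite (reindex_inj rev_ord_inj) /=; apply: eq_big => i; rewrite subSS;
    have le_in : (i <= n)%N by rewrite -ltnS.
    by rewrite oddB // n_odd; case: (odd i); case: p.
  by rewrite g_sym.
rewrite [in RHS](bigID (fun i : 'I_n.+1 => odd i == p)) /= -flip.
by rewrite mulrDl -splitr.
Qed.

Lemma sqrt_le_amgm (R : rcfType) (b t : R) : 0 <= b -> 0 < t ->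
  Num.sqrt b <= (t * b + t^-1) / 2.
Proof.
move=> b_ge0 t_gt0; set s := Num.sqrt b.
have -> : b = s ^+ 2 by rewrite sqr_sqrtr.
have tV : t * t^-1 = 1 by rewrite divff // gt_eqF.
have tV_ge0 : 0 <= t^-1 by rewrite invr_ge0 ltW.
have := mulr_ge0 tV_ge0 (sqr_ge0 (t * s - 1)).
nra.
Qed.

Lemma sum_sqrt_le_weighted (R : rcfType) (I : finType) (P : pred I) (b w : I -> R)
    (A B Z : R) :
  (forall i, 0 <= b i) -> (forall i, 0 < w i) -> 0 < A -> 0 < Z -> A * B <= Z ^+ 2 ->
  \sum_(i | P i) b i * w i <= A -> \sum_(i | P i) (w i)^-1 <= B ->
  \sum_(i | P i) Num.sqrt (b i) <= Z.
Proof.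
move=> b_ge0 w_gt0 A_gt0 Z_gt0 AB_le sum_bw sum_w.
pose lam := Z / A; have lam_gt0 : 0 < lam by rewrite divr_gt0.
apply: (le_trans (y := \sum_(i | P i) (lam * (b i * w i) + lam^-1 * (w i)^-1) / 2)).
  apply: ler_sum => i _.
  have lamw_gt0 := mulr_gt0 lam_gt0 (w_gt0 i).
  apply: le_trans (sqrt_le_amgm (b_ge0 i) lamw_gt0) _.
  by rewrite invfM -(mulrA lam) (mulrC (w i)).
rewrite -mulr_suml big_split /= -!mulr_sumr ler_pdivrMr // mulr2n mulrDr mulr1.
apply: lerD.
  by rewrite -(divfK (lt0r_neq0 A_gt0) Z) -/lam ler_wpM2l // ltW.
rewrite /lam invf_div mulrAC ler_pdivrMr // -expr2; apply: le_trans AB_le.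
by rewrite ler_wpM2l // ltW.
Qed.

Section ClampPrimitive.
Variables (R : realFieldType) (K : R).

(* The primitive of [min(1, K^2 / x^2)] vanishing at [0]. *)
Definition clamp_primitive (x : R) : R :=
  if x <= - K then - (2 * K) - K ^+ 2 / x
  else if x <= K then x else 2 * K - K ^+ 2 / x.

Lemma clamp_primitive_le_oppK x : x <= - K -> clamp_primitive x = - (2 * K) - K ^+ 2 / x.
Proof. by rewrite /clamp_primitive => ->. Qed.

Lemma clamp_primitive_mid x : 0 < K -> - K <= x <= K -> clamp_primitive x = x.
Proof.
move=> K_gt0 /andP [Kx xK]; rewrite /clamp_primitive xK.
case: ifP => // x_le; have -> : x = - K by lra.
by field; rewrite lt0r_neq0.
Qed.

Lemma clamp_primitive_ge_K x : 0 < K -> K <= x -> clamp_primitive x = 2 * K - K ^+ 2 / x.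
Proof.
move=> K_gt0 Kx; rewrite /clamp_primitive ifF; last by apply/negbTE; rewrite -ltNge; lra.
case: ifP => // xK; have -> : x = K by lra.
by field; rewrite lt0r_neq0.
Qed.

Lemma sqr_div_ge_le y : 0 < K -> K <= y -> 0 <= K ^+ 2 / y <= K.
Proof.
move=> K_gt0 Ky; have y_gt0 : 0 < y by lra.
apply/andP; split; first by rewrite divr_ge0 ?sqr_ge0 // ltW.
rewrite ler_pdivrMr //; nra.
Qed.

Lemma clamp_primitive_bound x : 0 < K -> - (2 * K) <= clamp_primitive x <= 2 * K.
Proof.
move=> K_gt0; have [xK|Kx] := lerP x (- K).
  rewrite clamp_primitive_le_oppK //.
  have := sqr_div_ge_le (y := - x) K_gt0; rewrite invrN mulrN; lra.
have [xK'|Kx'] := lerP x K; first by rewrite clamp_primitive_mid //; lra.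
by rewrite clamp_primitive_ge_K //; have := sqr_div_ge_le K_gt0 (ltW Kx'); lra.
Qed.

Lemma clamp_primitive_diff_mid x : 0 < K -> 1 - K <= x <= K ->
  clamp_primitive x - clamp_primitive (x - 1) = 1.
Proof. by move=> K_gt0 x_mid; rewrite !clamp_primitive_mid //; lra. Qed.

Lemma clamp_primitive_diff_tail x : 0 < K -> x <= - K \/ K + 1 <= x ->
  K ^+ 2 / (x - 1 / 2) ^+ 2 <= clamp_primitive x - clamp_primitive (x - 1).
Proof.
move=> K_gt0 x_tail.
have x_gt0 : 0 < x * (x - 1) by case: x_tail; nra.
have x_neq0 : x != 0 by apply: contraTneq x_gt0 => ->; rewrite mul0r ltxx.
have x1_neq0 : x - 1 != 0 by apply: contraTneq x_gt0 => ->; rewrite mulr0 ltxx.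
have -> : clamp_primitive x - clamp_primitive (x - 1) = K ^+ 2 / (x * (x - 1)).
  case: x_tail => x_tail.
    have x1_tail : x - 1 <= - K by lra.
    by rewrite !clamp_primitive_le_oppK //; field; rewrite x_neq0 x1_neq0.
  have [Kx Kx1] : K <= x /\ K <= x - 1 by split; lra.
  by rewrite !clamp_primitive_ge_K //; field; rewrite x_neq0 x1_neq0.
rewrite ler_wpM2l ?sqr_ge0 // lef_pV2 ?posrE //; nra.
Qed.

End ClampPrimitive.

Lemma sum_ffun_prod (R : comPzSemiRingType) (I : finType) (F : I -> bool -> R) :
  \sum_(u : {ffun I -> bool}) \prod_i F i (u i) = \prod_i (F i true + F i false).
Proof. by rewrite -bigA_distr_bigA; apply: eq_bigr => i _; rewrite big_bool. Qed.

Lemma sqrtr_prod (R : rcfType) (I : finType) (f : I -> R) : (forall i, 0 <= f i) ->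
  Num.sqrt (\prod_i f i) = \prod_i Num.sqrt (f i).
Proof.
move=> f_ge0.
suff [] : Num.sqrt (\prod_i f i) = \prod_i Num.sqrt (f i) /\ 0 <= \prod_i f i by [].
elim/big_rec2: _ => [|i y1 y2 _ [<- y2_ge0]]; first by rewrite sqrtr1.
by rewrite sqrtrM // mulr_ge0.
Qed.

Lemma sqrt_add_sqrt_compl_le_expR (R : realType) (s : R) : 0 <= s <= 1 ->
  Num.sqrt s + Num.sqrt (1 - s) <= expR (Num.sqrt s).
Proof.
move=> /andP [s_ge0 s_le1].
have : Num.sqrt (1 - s) <= 1 by rewrite -[leRHS]sqrtr1 ler_sqrt; lra.
by have := expR_ge1Dx (Num.sqrt s); lra.
Qed.

Lemma sqrtr_expR (R : realType) (x : R) : Num.sqrt (expR x) = expR (x / 2).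
Proof.
have -> : expR x = expR (x / 2) ^+ 2 by rewrite -expRM_natr divfK // pnatr_eq0.
by rewrite sqrtr_sqr ger0_norm // ltW // expR_gt0.
Qed.

Section ProductBernoulli.
Variables (R : realType) (n : nat) (S : nat -> R).
Hypothesis S01 : forall i : 'I_n.+1, 0 <= S i <= 1.
Local Notation P := (@prodP R n S).

Lemma prodP_ge0 u : 0 <= P u.
Proof. by rewrite /prodP; apply: prodr_ge0 => i _; have := S01 i; case: (u i); lra. Qed.

Lemma sum_prodP : \sum_u P u = 1.
Proof.
have := sum_ffun_prod (fun (i : 'I_n.+1) (b : bool) => if b then S i else 1 - S i).
by rewrite /prodP /= => ->; apply: big1 => i _; rewrite addrC subrK.
Qed.

Lemma card_prodP_ge t : 0 < t -> #|[set u | t <= P u]|%:R <= t^-1.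
Proof.
move=> t_gt0; rewrite -div1r ler_pdivlMr // mulr_natl -sumr_const -[leRHS]sum_prodP.
apply: le_trans (_ : \sum_(u in [set u | t <= P u]) P u <= _).
  by apply: ler_sum => u; rewrite inE.
rewrite [leRHS](bigID (mem [set u | t <= P u])) /= lerDl.
by apply: sumr_ge0 => u _; exact: prodP_ge0.
Qed.

Lemma sum_sqrt_prodP_le :
  \sum_u Num.sqrt (P u) <= expR (\sum_(i < n.+1) Num.sqrt (S i)).
Proof.
have -> : \sum_u Num.sqrt (P u)
    = \prod_(i < n.+1) (Num.sqrt (S i) + Num.sqrt (1 - S i)).
  have := sum_ffun_prod (fun (i : 'I_n.+1) (b : bool) =>
                           Num.sqrt (if b then S i else 1 - S i)).
  rewrite /= => <-; apply: eq_bigr => u _; rewrite sqrtr_prod // => i.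
  by have := S01 i; case: (u i); lra.
rewrite expR_sum; apply: ler_prod => i _.
by rewrite addr_ge0 ?sqrtr_ge0 //= sqrt_add_sqrt_compl_le_expR.
Qed.

Lemma sum_prodP_lt t : 0 <= t ->
  \sum_(u | P u < t) P u <= Num.sqrt t * expR (\sum_(i < n.+1) Num.sqrt (S i)).
Proof.
move=> t_ge0.
apply: le_trans (_ : \sum_(u | P u < t) Num.sqrt t * Num.sqrt (P u) <= _).
  apply: ler_sum => u Pu_lt; rewrite -{1}(sqr_sqrtr (prodP_ge0 u)) expr2.
  by rewrite ler_wpM2r ?sqrtr_ge0 // ler_sqrt // ltW.
rewrite -mulr_sumr ler_wpM2l ?sqrtr_ge0 //; apply: le_trans sum_sqrt_prodP_le.
rewrite [leRHS](bigID (fun u => P u < t)) /= lerDl.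
by apply: sumr_ge0 => u _; exact: sqrtr_ge0.
Qed.

End ProductBernoulli.

Section BinomialParitySqrt.
Variables (R : realType) (n s : nat).
Hypotheses (n_odd : odd n) (s_sqr_le : (s * s <= n)%N) (lt_s_sqr : (n < s.+1 * s.+1)%N).

Local Notation m := n./2.
Local Notation K := (s%:R : R).

Definition binom_dev (i : nat) : R := i%:R - n%:R / 2.

(* [max(1, binom_dev i ^+ 2 / K ^+ 2)], with the case split written on integers. *)
Definition binom_weight (i : nat) : R :=
  if (i + s <= m)%N || (m + s < i)%N then binom_dev i ^+ 2 / K ^+ 2 else 1.

Let n_half_eq : n = m.*2.+1.
Proof. by rewrite -[LHS](odd_double_half n) n_odd. Qed.

Let natr_half_eq : n%:R = 2 * m%:R + 1 :> R.
Proof. by rewrite [in LHS]n_half_eq -addn1 natrD -muln2 natrM mulrC. Qed.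

Let K_gt0 : 0 < K.
Proof.
rewrite ltr0n lt0n; apply: contraTneq lt_s_sqr => ->.
by rewrite -leqNgt lt0n; case: (n) n_odd.
Qed.

Lemma binom_dev_sqr_gt0 i : 0 < binom_dev i ^+ 2.
Proof.
rewrite lt_def sqr_ge0 andbT sqrf_eq0 /binom_dev subr_eq0; apply/eqP => eq_in.
have /eqP : (i.*2)%:R = n%:R :> R by rewrite -muln2 natrM eq_in; field.
by rewrite eqr_nat => /eqP n_eq; move: n_odd; rewrite -n_eq odd_double.
Qed.

Lemma binom_dev_sqr_sym i : (i <= n)%N -> binom_dev (n - i) ^+ 2 = binom_dev i ^+ 2.
Proof. by move=> le_in; rewrite /binom_dev natrB //; field. Qed.

Lemma binom_weight_gt0 i : 0 < binom_weight i.
Proof.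
rewrite /binom_weight; case: ifP => // _.
by rewrite divr_gt0 ?binom_dev_sqr_gt0 // exprn_gt0 // K_gt0.
Qed.

Lemma binom_weight_le i : binom_weight i <= 1 + binom_dev i ^+ 2 / K ^+ 2.
Proof.
have : 0 <= binom_dev i ^+ 2 / K ^+ 2 by rewrite divr_ge0 ?sqr_ge0.
by rewrite /binom_weight; case: ifP => _; lra.
Qed.

Lemma binom_weight_sym i : (i <= n)%N -> binom_weight (n - i) = binom_weight i.
Proof.
move=> le_in; rewrite /binom_weight orbC binom_dev_sqr_sym //.
have n_eq := n_half_eq.
by rewrite (_ : _ || _ = (i + s <= m)%N || (m + s < i)%N) //; congr orb; apply/idP/idP; lia.
Qed.

Lemma inv_binom_weight_le i : (binom_weight i)^-1 <=
  clamp_primitive K (i.+1%:R - m%:R - 1) - clamp_primitive K (i%:R - m%:R - 1).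
Proof.
have K_pos := K_gt0.
rewrite -natr1 (_ : i%:R + 1 - m%:R - 1 = i%:R - m%:R); last by ring.
have dev_i : binom_dev i = (i%:R - m%:R) - 1 / 2 by rewrite /binom_dev natr_half_eq; field.
rewrite /binom_weight; case: ifP => [outer|/negbT].
  rewrite invf_div dev_i; apply: clamp_primitive_diff_tail => //.
  case/orP: outer => [le_ims|lt_msi]; [left|right].
    by move: le_ims; rewrite -(ler_nat R) natrD; lra.
  by move: lt_msi; rewrite -addn1 -(ler_nat R) !natrD; lra.
rewrite negb_or -!ltnNge => /andP [lt_m_is le_i_ms].
move: lt_m_is le_i_ms; rewrite -addn1 -!(ler_nat R) !natrD => lt_m_is le_i_ms.
by rewrite invr1 clamp_primitive_diff_mid //; lra.
Qed.

Lemma sum_inv_binom_weight_le : \sum_(i < n.+1) (binom_weight i)^-1 <= 4 * K.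
Proof.
pose u k := clamp_primitive K (k%:R - m%:R - 1).
apply: le_trans (_ : \sum_(i < n.+1) (u i.+1 - u i) <= _).
  by apply: ler_sum => i _; exact: inv_binom_weight_le.
rewrite -(big_mkord xpredT (fun i => u i.+1 - u i)) telescope_sumr //.
have := clamp_primitive_bound (n.+1%:R - m%:R - 1) K_gt0.
have := clamp_primitive_bound (0%:R - m%:R - 1) K_gt0.
rewrite /u; lra.
Qed.

Lemma sum_inv_binom_weight_parity_le p :
  \sum_(i < n.+1 | odd i == p) (binom_weight i)^-1 <= 2 * K.
Proof.
rewrite (sum_parity_half p n_odd (g := fun i => (binom_weight i)^-1)) => [|i le_in].
  by have := sum_inv_binom_weight_le; lra.
by rewrite binom_weight_sym.
Qed.

Lemma sum_binomial_weight_parity_le p :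
  \sum_(i < n.+1 | odd i == p) 'C(n, i)%:R / 2 ^+ n * binom_weight i
    <= (1 + n%:R / (4 * K ^+ 2)) / 2.
Proof.
have pow2_neq0 : (2 : R) ^+ n != 0 by rewrite expf_neq0 // pnatr_eq0.
have K_neq0 : K != 0 by rewrite lt0r_neq0 // K_gt0.
apply: le_trans (_ : \sum_(i < n.+1 | odd i == p)
    'C(n, i)%:R / 2 ^+ n * (1 + binom_dev i ^+ 2 / K ^+ 2) <= _).
  by apply: ler_sum => i _; rewrite ler_wpM2l ?binom_weight_le // divr_ge0 // exprn_ge0.
rewrite (sum_parity_half p n_odd
  (g := fun i => 'C(n, i)%:R / 2 ^+ n * (1 + binom_dev i ^+ 2 / K ^+ 2))) => [|i le_in];
  last by rewrite bin_sub // binom_dev_sqr_sym.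
rewrite ler_pM2r ?invr_gt0 // (eq_bigr (fun i : 'I_n.+1 =>
  ('C(n, i)%:R + (2 * i%:R - n%:R) ^+ 2 *+ 'C(n, i) / (4 * K ^+ 2)) / 2 ^+ n)); last first.
  by move=> i _; rewrite /binom_dev -mulr_natr; field; rewrite pow2_neq0 K_neq0.
rewrite -mulr_suml big_split /= -mulr_suml sumr_binomial sumr_binomial_dev_sq.
by rewrite le_eqVlt; apply/orP; left; apply/eqP; field; rewrite pow2_neq0 K_neq0.
Qed.

Lemma binom_weight_sums_le :
  (1 + n%:R / (4 * K ^+ 2)) / 2 * (2 * K) <= Num.sqrt (2 * pi * n%:R).
Proof.
have K_pos := K_gt0.
have K2_le_n : K ^+ 2 <= n%:R by rewrite -natrX ler_nat -mulnn.
have n_le_4K2 : n%:R <= 4 * K ^+ 2.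
  by rewrite -natrX -(natrM R 4) ler_nat -mulnn; have := s_sqr_le; have := lt_s_sqr; nia.
have pi_ge2 : 2 <= pi :> R by exact: pi_ge2.
pose t := n%:R / (4 * K).
have tK : t * K = n%:R / 4 by rewrite /t; field; rewrite lt0r_neq0.
have t_ge0 : 0 <= t by rewrite /t divr_ge0 // mulr_ge0 // ltW.
have t_le_K : t <= K by rewrite /t ler_pdivrMr ?mulr_gt0 //; nra.
have -> : (1 + n%:R / (4 * K ^+ 2)) / 2 * (2 * K) = K + t.
  by rewrite /t; field; rewrite lt0r_neq0.
have -> : K + t = Num.sqrt ((K + t) ^+ 2) by rewrite sqrtr_sqr ger0_norm // addr_ge0 // ltW.
have n_ge0 : 0 <= n%:R :> R by [].
have := ler_wpM2l t_ge0 t_le_K; have := ler_wpM2r n_ge0 pi_ge2.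
by rewrite ler_sqrt ?mulr_ge0 //; [nra | lra].
Qed.

Lemma sum_sqrt_binomial_parity_le p :
  \sum_(i < n.+1 | odd i == p) Num.sqrt ('C(n, i)%:R / 2 ^+ n)
    <= Num.sqrt (Num.sqrt (2 * pi * n%:R)) :> R.
Proof.
apply: (sum_sqrt_le_weighted (b := fun i : 'I_n.+1 => 'C(n, i)%:R / 2 ^+ n)
  (w := fun i : 'I_n.+1 => binom_weight i) _ (fun i => binom_weight_gt0 i) _ _ _
  (sum_binomial_weight_parity_le p) (sum_inv_binom_weight_parity_le p)).
- by move=> i; rewrite divr_ge0 // exprn_ge0.
- by rewrite divr_gt0 // ltr_pwDl // divr_ge0 // mulr_ge0 // ?sqr_ge0.
- by rewrite !sqrtr_gt0 !mulr_gt0 ?pi_gt0 // ltr0n lt0n; case: (n) n_odd.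
- by rewrite sqr_sqrtr ?sqrtr_ge0 // binom_weight_sums_le.
Qed.

End BinomialParitySqrt.

Theorem lemma5 (R : realType) (n : nat) (alpha : R)
  (hn : odd n) (halpha : 0 < alpha)
  (hle : forall i : nat, (i <= n)%N -> alpha * bin n (1 / 2) i <= 1) :
  forall S : nat -> R, (S = S_e alpha n \/ S = S_o alpha n) ->
    (#|[set u : {ffun 'I_n.+1 -> bool} |
         expR (- (Num.sqrt (n%:R : R) / 2)) <= prodP S u]|%:R
       <= expR (Num.sqrt (n%:R : R) / 2))
    /\
    (\sum_(u : {ffun 'I_n.+1 -> bool} |
           prodP S u < expR (- (Num.sqrt (n%:R : R) / 2))) prodP S u
       <= expR (Num.sqrt alpha * Num.sqrt (Num.sqrt (2 * (pi : R) * n%:R))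
                - Num.sqrt (n%:R : R) / 4)).
Proof.
move=> S S_def.
have [p S_eq] : exists p, forall i,
    S i = if odd i == p then alpha * ('C(n, i)%:R / 2 ^+ n) else 0.
  by case: S_def => ->; [exists false | exists true] => i;
    rewrite /S_e /S_o bin_half ?eqbF_neg ?eqb_id.
have S01 (i : 'I_n.+1) : 0 <= S i <= 1.
  have le_in : (i <= n)%N by rewrite -ltnS.
  rewrite S_eq; case: ifP => _; last by rewrite lexx ler01.
  by rewrite -bin_half hle // andbT mulr_ge0 ?(ltW halpha) // bin_half divr_ge0 ?exprn_ge0.
split.
  by have := card_prodP_ge S01 (expR_gt0 (- (Num.sqrt n%:R / 2))); rewrite -expRN opprK.
apply: le_trans (sum_prodP_lt S01 (ltW (expR_gt0 _))) _.
rewrite sqrtr_expR -expRD ler_expR.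
have -> : \sum_(i < n.+1) Num.sqrt (S i)
    = Num.sqrt alpha * \sum_(i < n.+1 | odd i == p) Num.sqrt ('C(n, i)%:R / 2 ^+ n).
  rewrite [in RHS]big_mkcond mulr_sumr; apply: eq_bigr => i _; rewrite S_eq.
  by case: ifP => _; [rewrite sqrtrM // ltW | rewrite sqrtr0 mulr0].
have [s s_le lt_s] := nat_sqrt_exists n.
have := ler_wpM2l (sqrtr_ge0 alpha) (sum_sqrt_binomial_parity_le R hn s_le lt_s p).
lra.
Qed.
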